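(* Let $A=\mathbb{Z}_2^n\times A_{2'}$, where $n\ge 1$ and $A_{2'}$ is a finite abelian group of odd order. Then a subgroup $H$ of $A$ is a subgroup perfect code of $A$ if and only if either $|H|$ is even or $H=\{0\}\times A_{2'}$.
   Context: Groups are written additively with identity $0$. An element $x\in A$ is a square if $x=2y$ for some $y\in A$; a subset is square-free if it contains no squares. For a square-free $T\subseteq A$, the Cayley sum graph $\mathrm{CayS}(A,T)$ is the simple graph with vertex set $A$ in which distinct $x,y$ are adjacent iff $x+y\in T$. A subset $C$ of the vertex set of a graph is a perfect code if every vertex is at distance at most one from exactly one vertex of $C$. A subgroup $H$ of $A$ is a subgroup perfect code of $A$ if $H$ is a perfect code of $\mathrm{CayS}(A,T)$ for some square-free $T\subseteq A$ (the empty set allowed). *)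

From HB Require Import structures.
From mathcomp Require Import all_boot all_order all_algebra.
Set Implicit Arguments. Unset Strict Implicit. Unset Printing Implicit Defensive.
Import GRing.Theory.
Local Open Scope ring_scope.

Section CayleySum.
Variable A : finZmodType.

Definition is_square (x : A) : bool := [exists y : A, x == y *+ 2].

Definition square_free (T : {set A}) : bool := [forall x in T, ~~ is_square x].

Definition cays_adj (T : {set A}) (x y : A) : bool := (x != y) && (x + y \in T).

Definition perfect_code (e : A -> A -> bool) (C : {set A}) : bool :=
  [forall v : A, #|[set c in C | (c == v) || e v c]| == 1%N].

Definition is_subgroup (H : {set A}) : bool :=
  (0 \in H) && [forall x in H, forall y in H, x - y \in H].

Definition subgroup_perfect_code (H : {set A}) : Prop :=
  exists T : {set A}, square_free T /\ perfect_code (cays_adj T) H.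
End CayleySum.

Definition Z2n_times (n : nat) (B : finZmodType) : Type := ('rV['Z_2]_n * B)%type.
HB.instance Definition _ n B := GRing.Zmodule.on (Z2n_times n B).
HB.instance Definition _ n B := Finite.on (Z2n_times n B).

From mathcomp Require Import all_boot all_order all_algebra.
From mathcomp Require Import all_fingroup all_solvable.
Set Implicit Arguments.
Unset Strict Implicit.
Unset Printing Implicit Defensive.
Import GRing.Theory.
Local Open Scope ring_scope.

(* A subgroup H of a finite abelian group is a subgroup perfect code exactly
   when every coset v + H other than H contains a non-square: a square-free
   T picking one non-square from each such coset makes every v outside H
   adjacent to exactly one vertex of H, and conversely the neighbour c of v
   in H exhibits the non-square v + c.  In Z_2^n x A_2' the squares are the
   elements with trivial Z_2^n-component (doubling is invertible on A_2').
   A subgroup of odd order lies in this subgroup of squares, so it must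
   contain every square; a subgroup of even order contains an involution
   with nontrivial Z_2^n-component, which moves any coset representative
   off the squares. *)

Section SubgroupPerfectCode.
Variables (A : finZmodType) (H : {set A}).
Hypothesis subH : is_subgroup H.

Lemma subgroup0 : 0 \in H.
Proof. by case/andP: subH. Qed.

Lemma subgroupB x y : x \in H -> y \in H -> x - y \in H.
Proof. by case/andP: subH => _ /forall_inP/[apply]/forall_inP/[apply]. Qed.

Lemma subgroupN x : x \in H -> - x \in H.
Proof. by move=> xH; rewrite -sub0r subgroupB ?subgroup0. Qed.

Lemma subgroupD x y : x \in H -> y \in H -> x + y \in H.
Proof. by move=> xH yH; rewrite -[y]opprK subgroupB ?subgroupN. Qed.

Lemma subgroup_group_set : group_set H.
Proof. by apply/group_setP; split; [apply: subgroup0 | apply: subgroupD]. Qed.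

Definition nonsquare_coset_rep (v : A) : option A :=
  [pick x | (x - v \in H) && ~~ is_square x].

Lemma nonsquare_coset_rep_eq u v :
  u - v \in H -> nonsquare_coset_rep u = nonsquare_coset_rep v.
Proof.
move=> uvH; apply: eq_pick => x; congr (_ && _).
have -> : x - u = (x - v) - (u - v) by rewrite opprB addrA subrK.
apply/idP/idP => [xuH | xvH]; last exact: subgroupB.
by rewrite -(subrK (u - v) (x - v)) subgroupD.
Qed.

Definition nonsquare_transversal : {set A} :=
  [set t | (t \notin H) && (nonsquare_coset_rep t == Some t)].

Lemma square_free_nonsquare_transversal : square_free nonsquare_transversal.
Proof.
apply/forall_inP => t; rewrite inE /nonsquare_coset_rep.
by case: pickP => [x /andP[_ nsx] /andP[_ /eqP[<-]] | _ /andP[]].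
Qed.

Lemma perfect_code_nonsquare_transversal :
  (forall v, v \notin H -> exists2 x, x - v \in H & ~~ is_square x) ->
  perfect_code (cays_adj nonsquare_transversal) H.
Proof.
move=> nonsq_coset; apply/forallP => v; apply/cards1P.
have [vH | vNH] := boolP (v \in H).
  exists v; apply/setP => c; rewrite !inE /cays_adj.
  have [-> | _] := eqVneq c v; first by rewrite vH.
  by case cH: (c \in H); rewrite //= inE subgroupD.
have [p repv] : exists p, nonsquare_coset_rep v = Some p.
  rewrite /nonsquare_coset_rep; case: pickP => [p _ | none]; first by exists p.
  have [x xvH /negbTE nsx] := nonsq_coset v vNH.
  by move: (none x); rewrite xvH nsx.
have pvH : p - v \in H.
  move: repv; rewrite /nonsquare_coset_rep.
  by case: pickP => // x /andP[? _] [<-].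
exists (p - v); apply/setP => c; rewrite !inE /cays_adj.
have [cH | cNH] := boolP (c \in H); last first.
  by apply/esym/negP => /eqP cE; rewrite cE pvH in cNH.
have vcNH : v + c \notin H.
  by apply: contra vNH => /subgroupB/(_ cH); rewrite addrK.
have [cv | _] := eqVneq c v; first by rewrite -cv cH in vNH.
rewrite /= inE vcNH (@nonsquare_coset_rep_eq (v + c) v) ?repv; last first.
  by rewrite addrC addKr.
by apply/eqP/eqP => [[->] | ->]; rewrite addrC ?addKr ?subrK.
Qed.

Lemma subgroup_perfect_codeP :
  subgroup_perfect_code H <->
  (forall v, v \notin H -> exists2 x, x - v \in H & ~~ is_square x).
Proof.
split=> [[T [sqfT /forallP pcT]] v vNH | nonsq_coset].
  have /cards1P[c cE] := pcT v.
  have := set11 c; rewrite -cE inE /cays_adj => /andP[cH].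
  case/orP => [/eqP cv | /andP[_ vcT]]; first by rewrite -cv cH in vNH.
  exists (v + c); first by rewrite addrC addKr.
  exact: (forall_inP sqfT).
exists nonsquare_transversal; split.
  exact: square_free_nonsquare_transversal.
exact: perfect_code_nonsquare_transversal.
Qed.

End SubgroupPerfectCode.

Lemma Z2mod_mulr2n (V : lmodType 'Z_2) (v : V) : v *+ 2 = 0.
Proof. by rewrite -scaler_nat (_ : 2%:R = 0) ?scale0r //; apply/val_inj. Qed.

Lemma Z2mod_mulrn_odd (V : lmodType 'Z_2) (v : V) k : odd k -> v *+ k = v.
Proof.
move=> oddk; rewrite -[k]odd_double_half oddk mulrnDr -muln2 mulrnA.
by rewrite Z2mod_mulr2n addr0.
Qed.

Lemma mulrn_card (G : finZmodType) (x : G) : x *+ #|G| = 0.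
Proof. by have := expg_cardG (in_setT x); rewrite cardsT. Qed.

Section OddOrder.
Variable G : finZmodType.
Hypothesis oddG : odd #|G|.

Lemma odd_card_halfK (x : G) : x *+ #|G|./2.+1 *+ 2 = x.
Proof.
rewrite -mulrnA -[x in RHS]add0r -(mulrn_card x) -mulrSr.
by rewrite -[in RHS](odd_double_half #|G|) oddG muln2 doubleS.
Qed.

Lemma odd_card_mulr2n_eq0 (x : G) : x *+ 2 = 0 -> x = 0.
Proof. by move=> x2; rewrite -(odd_card_halfK x) -mulrnAC x2 mul0rn. Qed.

End OddOrder.

Lemma fst_mulrn (U V : zmodType) (x : U * V) k : (x *+ k).1 = x.1 *+ k.
Proof. by elim: k => [|k IHk] //; rewrite !mulrS /= IHk. Qed.

Lemma snd_mulrn (U V : zmodType) (x : U * V) k : (x *+ k).2 = x.2 *+ k.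
Proof. by elim: k => [|k IHk] //; rewrite !mulrS /= IHk. Qed.

Section Z2nTimesOdd.
Variables (n : nat) (B : finZmodType).
Local Notation A := (Z2n_times n B).

Hypothesis oddB : odd #|B|.

Lemma is_square_Z2n_times (x : A) : is_square x = (x.1 == 0).
Proof.
apply/existsP/eqP => [[y /eqP ->] | x1].
  by rewrite fst_mulrn Z2mod_mulr2n.
exists (0, x.2 *+ #|B|./2.+1); apply/eqP; apply/esym/injective_projections.
  by rewrite fst_mulrn mul0rn x1.
by rewrite snd_mulrn odd_card_halfK.
Qed.

Variable H : {set A}.
Hypothesis subH : is_subgroup H.
Local Notation HG := (Group (subgroup_group_set subH)).

Lemma odd_subgroup_fst (h : A) : odd #|H| -> h \in H -> h.1 = 0.
Proof.
move=> oddH hH; have hcard : h *+ #|H| = 0 := expg_cardG (hH : h \in HG).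
by move: (congr1 fst hcard); rewrite fst_mulrn Z2mod_mulrn_odd.
Qed.

Lemma even_subgroup_fst : ~~ odd #|H| -> exists2 h : A, h \in H & h.1 != 0.
Proof.
move=> evenH; have evenHG : (2 %| #|HG|)%N by rewrite dvdn2.
have [h hH ord_h] := Cauchy (isT : prime 2) evenHG.
exists h => //; apply/eqP => h1.
have h2 : h *+ 2 = 0 by rewrite -ord_h; apply: expg_order.
have h20 : h.2 = 0 by apply: odd_card_mulr2n_eq0; rewrite // -snd_mulrn h2.
have h0 : h = 0 by case: h h1 h20 {hH ord_h h2} => a b /= -> ->.
by move: ord_h; rewrite h0 order1.
Qed.

End Z2nTimesOdd.

Theorem proposition3p10 (n : nat) (B : finZmodType)
    (H : {set Z2n_times n B}) :
  (1 <= n)%N -> odd #|B| -> is_subgroup H ->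
  (subgroup_perfect_code H <->
   ~~ odd #|H| \/ H = [set x : Z2n_times n B | x.1 == 0]).
Proof.
move=> _ oddB subH; apply: iff_trans (subgroup_perfect_codeP subH) _.
split=> [nonsq_coset | [evenH | ->] v vNH].
- have [oddH | evenH] := boolP (odd #|H|); [right | by left].
  apply/setP => v; rewrite inE; apply/idP/eqP => [|v1].
    exact: odd_subgroup_fst.
  apply/negPn/negP => /nonsq_coset[x xvH].
  rewrite is_square_Z2n_times // => /eqP; apply.
  have -> : x.1 = (x - v).1 + v.1 by rewrite /= subrK.
  by rewrite v1 addr0 (odd_subgroup_fst subH).
- have [h hH h1] := even_subgroup_fst oddB subH evenH.
  have [v1 | v1] := eqVneq v.1 0.
    exists (v + h); first by rewrite addrC addKr.
    by rewrite is_square_Z2n_times //= v1 add0r.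
  by exists v; rewrite ?subrr ?(subgroup0 subH) ?is_square_Z2n_times.
- exists v; first by rewrite subrr inE.
  by move: vNH; rewrite inE is_square_Z2n_times.
Qed.
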